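(* Let $X$ be an arbitrary set, let $\mathcal{P}=\{X_i \mid i\in I\}$ be a partition of $X$, and let $f\in T(X,\mathcal{P})$. Then the following statements are equivalent: (i) $f\in \Sigma(X,\mathcal{P})$; (ii) the character $\chi^{(f)}\colon I\to I$ is surjective; (iii) $f\in S_{\mathcal{P}}(X)$ and $Af^{-1}\neq\emptyset$ for every nonempty open set $A\subseteq X$ (open with respect to the topology on $X$ having $\mathcal{P}$ as a basis).
   Context: Maps are written on the right: $xf$ is the image of $x$, and $Af=\{af\mid a\in A\}$, $Af^{-1}=\{x\in X\mid xf\in A\}$. $\mathcal{T}_X$ is the semigroup of all maps $X\to X$. For a partition $\mathcal{P}=\{X_i\mid i\in I\}$ of $X$ (distinct indices correspond to distinct blocks), $T(X,\mathcal{P})=\{f\in\mathcal{T}_X \mid \forall i\in I\ \exists j\in I:\ X_if\subseteq X_j\}$ and $\Sigma(X,\mathcal{P})=\{f\in T(X,\mathcal{P})\mid Xf\cap X_i\neq\emptyset \text{ for all } i\in I\}$. For $f\in T(X,\mathcal{P})$, the character of $f$ is the map $\chi^{(f)}\colon I\to I$ defined by $i\chi^{(f)}=j$ whenever $X_if\subseteq X_j$. The topology on $X$ having $\mathcal{P}$ as a basis is the one whose open sets are exactly the unions of blocks of $\mathcal{P}$; $S_{\mathcal{P}}(X)$ denotes the set of all continuous maps $X\to X$ for this topology. *)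

(* sets are predicates X -> Prop. Maps are ordinary functions
   (the paper writes them on the right: x f = f x). *)
From Stdlib Require Import ClassicalEpsilon.

Set Implicit Arguments.

Record is_partition (X I : Type) (P : I -> X -> Prop) : Prop := {
  part_nonempty : forall i, exists x, P i x;
  part_disjoint : forall i j x, P i x -> P j x -> i = j;
  part_cover    : forall x, exists i, P i x }.

Definition in_T (X I : Type) (P : I -> X -> Prop) (f : X -> X) : Prop :=
  forall i, exists j, forall x, P i x -> P j (f x).

Definition in_Sigma (X I : Type) (P : I -> X -> Prop) (f : X -> X) : Prop :=
  in_T P f /\ forall i, exists x, P i (f x).

(* The character chi^(f) : I -> I of f in T(X,P): i chi = j whenever X_i f ⊆ X_j.
   (For a partition, such j is unique.) *)
Definition character (X I : Type) (P : I -> X -> Prop) (f : X -> X)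
  (Hf : in_T P f) : I -> I :=
  fun i => proj1_sig (constructive_indefinite_description _ (Hf i)).

Definition surjective (A B : Type) (g : A -> B) : Prop :=
  forall b, exists a, g a = b.

Definition P_open (X I : Type) (P : I -> X -> Prop) (A : X -> Prop) : Prop :=
  exists J : I -> Prop, forall x, A x <-> exists i, J i /\ P i x.

Definition P_continuous (X I : Type) (P : I -> X -> Prop) (f : X -> X) : Prop :=
  forall A, P_open P A -> P_open P (fun x => A (f x)).

From Stdlib Require Import ClassicalEpsilon.

Set Implicit Arguments.

(* Since f maps X_i into X_(chi i) and the blocks are disjoint, the image of f
   meets X_j exactly when j lies in the range of chi; this gives (i) <-> (ii).
   Every f in T(X,P) is continuous, the preimage of X_j being the union of the
   X_i with chi i = j.  Finally, blocks are nonempty open sets and every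
   nonempty open set contains a block, so "every nonempty open set has a
   nonempty preimage" is again "the image of f meets every block". *)

Section Character.

Variables (X I : Type) (P : I -> X -> Prop) (f : X -> X).
Hypothesis HP : is_partition P.
Hypothesis Hf : in_T P f.

Lemma character_spec i x : P i x -> P (character Hf i) (f x).
Proof.
  unfold character.
  destruct (constructive_indefinite_description _ (Hf i)) as [j Hj]; simpl.
  apply Hj.
Qed.

Lemma character_eq i j x : P i x -> P j (f x) -> character Hf i = j.
Proof.
  intros Hi Hj.
  exact (part_disjoint HP _ _ _ (character_spec Hi) Hj).
Qed.

Lemma surjective_character_iff :
  surjective (character Hf) <-> forall j, exists x, P j (f x).
Proof.
  split.
  - intros Hsurj j.
    destruct (Hsurj j) as [i <-].
    destruct (part_nonempty HP i) as [x Hx].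
    exists x; exact (character_spec Hx).
  - intros Himg j.
    destruct (Himg j) as [x Hx].
    destruct (part_cover HP x) as [i Hi].
    exists i; exact (character_eq Hi Hx).
Qed.

Lemma in_T_continuous : P_continuous P f.
Proof.
  intros A [J HJ].
  exists (fun i => J (character Hf i)); intros x.
  rewrite HJ.
  destruct (part_cover HP x) as [i Hi].
  split.
  - intros [k [Jk Hk]].
    exists i; split; [| exact Hi].
    rewrite (character_eq Hi Hk); exact Jk.
  - intros [k [Jk Hk]].
    exists (character Hf k); split; [exact Jk |].
    exact (character_spec Hk).
Qed.

End Character.

Lemma block_open (X I : Type) (P : I -> X -> Prop) j : P_open P (P j).
Proof.
  exists (fun k => k = j); intros x; split.
  - intros Hx; exists j; auto.
  - intros [k [-> Hk]]; exact Hk.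
Qed.

Lemma open_preimage_nonempty_iff (X I : Type) (P : I -> X -> Prop) (f : X -> X)
  (HP : is_partition P) :
  (forall A, P_open P A -> (exists x, A x) -> exists x, A (f x)) <->
  (forall j, exists x, P j (f x)).
Proof.
  split.
  - intros Hopen j.
    exact (Hopen _ (block_open P j) (part_nonempty HP j)).
  - intros Himg A [J HJ] [x Ax].
    apply HJ in Ax; destruct Ax as [k [Jk _]].
    destruct (Himg k) as [y Hy].
    exists y; apply HJ; exists k; auto.
Qed.

Theorem theorem3p2 (X I : Type) (P : I -> X -> Prop) (f : X -> X)
  (HP : is_partition P) (Hf : in_T P f) :
  (in_Sigma P f <-> surjective (character Hf)) /\
  (surjective (character Hf) <->
     (P_continuous P f /\
      forall A : X -> Prop, P_open P A -> (exists x, A x) ->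
        exists x, A (f x))).
Proof.
  rewrite (surjective_character_iff HP Hf), (open_preimage_nonempty_iff f HP).
  unfold in_Sigma.
  split; split; try tauto.
  intros Himg; split; [exact (in_T_continuous HP Hf) | exact Himg].
Qed.
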